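(* For $\xi = (\tau_L,\delta_L,\tau_R,\delta_R) \in \mathbb{R}^4$ let $$f_\xi(x,y) = \begin{cases} (\tau_L x + y + 1,\ -\delta_L x), & x \le 0,\\ (\tau_R x + y + 1,\ -\delta_R x), & x \ge 0,\end{cases}$$ and let $\Phi = \{\xi : \tau_L > |\delta_L + 1|,\ \tau_R < -|\delta_R+1|\}$. For $\xi\in\Phi$, the matrix $\begin{bmatrix}\tau_L & 1\\ -\delta_L & 0\end{bmatrix}$ has eigenvalues $\lambda_L^s,\lambda_L^u$ with $|\lambda_L^s|<1<\lambda_L^u$, and $\begin{bmatrix}\tau_R & 1\\ -\delta_R & 0\end{bmatrix}$ has eigenvalues $\lambda_R^s,\lambda_R^u$ with $|\lambda_R^s|<1$, $\lambda_R^u<-1$. Let $$\phi^+(\xi) = \delta_R - \big(\tau_R + \delta_L + \delta_R - (1+\tau_R)\lambda_L^u\big)\lambda_L^u,\qquad \phi^-(\xi) = \delta_R - \big(\delta_R + \tau_R - (1+\lambda_R^u)\lambda_L^u\big)\lambda_L^u,$$ $\phi_{\min}(\xi) = \min[\phi^+(\xi),\phi^-(\xi)]$, and $T = \left(\frac{1}{1-\lambda_R^s}, 0\right)$. If $\xi \in \Phi$ with $\phi_{\min}(\xi) > 0$ and $\lambda_L^s = \lambda_R^s$, then $f_\xi$ maps the line segment from $T$ to $f_\xi(T)$ into itself, and on this segment $f_\xi$ is conjugate to the skew tent map $$z \mapsto \begin{cases} \lambda_L^u z + 1, & z \le 0,\\ \lambda_R^u z + 1, & z \ge 0,\end{cases}$$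 restricted to the interval $[\lambda_R^u + 1, 1]$. *)

From Stdlib Require Import Reals Lra.
Open Scope R_scope.

Definition f_xi (tauL deltaL tauR deltaR : R) (p : R * R) : R * R :=
  let (x, y) := p in
  if Rle_dec x 0 then (tauL * x + y + 1, - deltaL * x)
  else (tauR * x + y + 1, - deltaR * x).

Definition in_Phi (tauL deltaL tauR deltaR : R) : Prop :=
  tauL > Rabs (deltaL + 1) /\ tauR < - Rabs (deltaR + 1).

Definition is_eigenvalue2 (a b c d lam : R) : Prop :=
  exists v1 v2 : R, (v1 <> 0 \/ v2 <> 0) /\
    a * v1 + b * v2 = lam * v1 /\ c * v1 + d * v2 = lam * v2.

Definition phi_plus (tauL deltaL tauR deltaR lamLu : R) : R :=
  deltaR - (tauR + deltaL + deltaR - (1 + tauR) * lamLu) * lamLu.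

Definition phi_minus (tauL deltaL tauR deltaR lamLu lamRu : R) : R :=
  deltaR - (deltaR + tauR - (1 + lamRu) * lamLu) * lamLu.

Definition skew_tent (lamLu lamRu z : R) : R :=
  if Rle_dec z 0 then lamLu * z + 1 else lamRu * z + 1.

Definition segment (P Q : R * R) (p : R * R) : Prop :=
  exists s : R, 0 <= s <= 1 /\
    p = (fst P + s * (fst Q - fst P), snd P + s * (snd Q - snd P)).

Definition continuous_on_interval (a b : R) (h : R -> R * R) : Prop :=
  forall z, a <= z <= b -> forall eps, eps > 0 -> exists del, del > 0 /\
    forall w, a <= w <= b -> Rabs (w - z) < del ->
      Rabs (fst (h w) - fst (h z)) < eps /\ Rabs (snd (h w) - snd (h z)) < eps.

(* When the two pieces of f share the stable eigenvalue s, the row vector (s, 1) is a left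
   eigenvector of both matrices for s.  Hence l(x, y) = s x + y obeys l(f p) = s l(p) + s on
   both halves, and the line l = s / (1 - s) is invariant.  Along that line the coordinate
   z = (1 - s) x evolves exactly by the skew tent map.  The factorisation
   phi^- = (lamLu - s)((1 + lamRu) lamLu - lamRu) shows that the tent map sends
   [lamRu + 1, 1] into itself, and T, f T are the points of the line with z = 1, z = lamRu + 1. *)
From Stdlib Require Import Reals Lra Psatz.
Open Scope R_scope.

Lemma companion_eigenvalue_root (a c lam : R) :
  is_eigenvalue2 a 1 c 0 lam -> lam * lam - a * lam - c = 0.
Proof.
  intros [v1 [v2 [Hnz [H1 H2]]]].
  assert (Hv2 : v2 = (lam - a) * v1) by lra.
  subst v2.
  assert (Hv1 : v1 <> 0) by (destruct Hnz as [Hn | Hn]; [exact Hn | intro E; apply Hn; subst; ring]).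
  apply (Rmult_eq_reg_r v1); [lra | exact Hv1].
Qed.

Lemma companion_vieta (t d s u : R) :
  is_eigenvalue2 t 1 (- d) 0 s -> is_eigenvalue2 t 1 (- d) 0 u -> s <> u ->
  t = s + u /\ d = s * u.
Proof.
  intros Hs Hu Hsu.
  apply companion_eigenvalue_root in Hs. apply companion_eigenvalue_root in Hu.
  assert (Ht : t = s + u).
  { apply (Rmult_eq_reg_l (s - u)); [nra | lra]. }
  split; [exact Ht | subst t; nra].
Qed.

Definition affine_path (P V : R * R) (z : R) : R * R :=
  (fst P + z * fst V, snd P + z * snd V).

Lemma affine_path_continuous (P V : R * R) (a b : R) :
  continuous_on_interval a b (affine_path P V).
Proof.
  intros z _ eps Heps.
  pose proof (Rabs_pos (fst V)). pose proof (Rabs_pos (snd V)).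
  set (K := 1 + Rabs (fst V) + Rabs (snd V)).
  assert (HK : 0 < K) by (unfold K; lra).
  exists (eps / K). split; [apply Rdiv_lt_0_compat; lra |].
  intros w _ Hwz. unfold affine_path; simpl.
  replace (fst P + w * fst V - (fst P + z * fst V)) with ((w - z) * fst V) by ring.
  replace (snd P + w * snd V - (snd P + z * snd V)) with ((w - z) * snd V) by ring.
  rewrite !Rabs_mult.
  assert (Hd : Rabs (w - z) * K < eps).
  { apply (Rmult_lt_compat_r K) in Hwz; [| exact HK].
    replace (eps / K * K) with eps in Hwz by (field; lra). exact Hwz. }
  pose proof (Rabs_pos (w - z)).
  unfold K in Hd. split; nra.
Qed.

Lemma affine_path_inj (P V : R * R) (z w : R) :
  fst V <> 0 -> affine_path P V z = affine_path P V w -> z = w.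
Proof.
  intros HV E. apply (f_equal fst) in E. unfold affine_path in E; simpl in E.
  apply (Rmult_eq_reg_r (fst V)); [lra | exact HV].
Qed.

Lemma segment_affine_path (P V : R * R) (a b : R) (p : R * R) :
  a < b ->
  segment (affine_path P V b) (affine_path P V a) p <->
  exists z, a <= z <= b /\ affine_path P V z = p.
Proof.
  intros Hab. unfold segment, affine_path; simpl. split.
  - intros [t [Ht ->]]. exists (b + t * (a - b)). split; [nra |].
    f_equal; ring.
  - intros [z [Hz <-]]. exists ((b - z) / (b - a)).
    assert (Ht : (b - z) / (b - a) * (b - a) = b - z) by (field; lra).
    split; [split; nra |].
    f_equal; field; lra.
Qed.

Definition tent_chart (s : R) : R -> R * R :=
  affine_path (0, s / (1 - s)) (1 / (1 - s), - s / (1 - s)).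

Lemma f_xi_tent_chart (s u r z : R) :
  s < 1 ->
  f_xi (s + u) (s * u) (s + r) (s * r) (tent_chart s z) =
  tent_chart s (skew_tent u r z).
Proof.
  intros Hs.
  assert (Hsign : z * (1 / (1 - s)) <= 0 <-> z <= 0).
  { assert (0 < 1 / (1 - s)) by (apply Rdiv_lt_0_compat; lra). split; nra. }
  unfold f_xi, tent_chart, affine_path, skew_tent; simpl.
  rewrite Rplus_0_l.
  destruct (Rle_dec (z * (1 / (1 - s))) 0) as [Hx | Hx];
    destruct (Rle_dec z 0) as [Hz | Hz]; try tauto;
    f_equal; field; lra.
Qed.

Lemma skew_tent_maps_interval (u r z : R) :
  0 <= u -> r <= 0 -> r < (1 + r) * u ->
  r + 1 <= z <= 1 -> r + 1 <= skew_tent u r z <= 1.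
Proof.
  intros Hu Hr Hur Hz. unfold skew_tent.
  destruct (Rle_dec z 0); split; nra.
Qed.

Lemma phi_minus_common_stable (tauL deltaL s u r : R) :
  phi_minus tauL deltaL (s + r) (s * r) u r = (u - s) * ((1 + r) * u - r).
Proof. unfold phi_minus. ring. Qed.

Theorem proposition10p1
  (tauL deltaL tauR deltaR lamLs lamLu lamRs lamRu : R) :
  in_Phi tauL deltaL tauR deltaR ->
  is_eigenvalue2 tauL 1 (- deltaL) 0 lamLs ->
  is_eigenvalue2 tauL 1 (- deltaL) 0 lamLu ->
  Rabs lamLs < 1 -> 1 < lamLu ->
  is_eigenvalue2 tauR 1 (- deltaR) 0 lamRs ->
  is_eigenvalue2 tauR 1 (- deltaR) 0 lamRu ->
  Rabs lamRs < 1 -> lamRu < -1 ->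
  Rmin (phi_plus tauL deltaL tauR deltaR lamLu)
       (phi_minus tauL deltaL tauR deltaR lamLu lamRu) > 0 ->
  lamLs = lamRs ->
  let f := f_xi tauL deltaL tauR deltaR in
  let T := (1 / (1 - lamRs), 0) in
  (* f maps the segment [T, f T] into itself *)
  (forall p, segment T (f T) p -> segment T (f T) (f p)) /\
  (* and on it f is conjugate to the skew tent map on [lamRu + 1, 1] *)
  (exists h : R -> R * R,
     continuous_on_interval (lamRu + 1) 1 h /\
     (forall z w, lamRu + 1 <= z <= 1 -> lamRu + 1 <= w <= 1 -> h z = h w -> z = w) /\
     (forall p, segment T (f T) p <-> exists z, lamRu + 1 <= z <= 1 /\ h z = p) /\
     (forall z, lamRu + 1 <= z <= 1 ->
        lamRu + 1 <= skew_tent lamLu lamRu z <= 1 /\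
        f (h z) = h (skew_tent lamLu lamRu z))).
Proof.
  intros _ HLs HLu _ HLu1 HRs HRu HRs1 HRu1 Hmin <-.
  set (s := lamLs) in *. set (u := lamLu) in *. set (r := lamRu) in *.
  assert (Hs : -1 < s < 1) by (destruct (Rabs_def2 _ _ HRs1); lra).
  destruct (companion_vieta _ _ _ _ HLs HLu ltac:(lra)) as [-> ->].
  destruct (companion_vieta _ _ _ _ HRs HRu ltac:(lra)) as [-> ->].
  assert (Htent : r < (1 + r) * u).
  { pose proof (Rmin_r (phi_plus (s + u) (s * u) (s + r) (s * r) u)
                       (phi_minus (s + u) (s * u) (s + r) (s * r) u r)).
    rewrite phi_minus_common_stable in *. nra. }
  intros f T.
  assert (Hconj : forall z, r + 1 <= z <= 1 ->
            r + 1 <= skew_tent u r z <= 1 /\ f (tent_chart s z) = tent_chart s (skew_tent u r z)).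
  { intros z Hz. split; [apply skew_tent_maps_interval; lra | apply f_xi_tent_chart; lra]. }
  assert (HT : T = tent_chart s 1).
  { unfold T, tent_chart, affine_path; simpl. f_equal; field; lra. }
  assert (HfT : f T = tent_chart s (r + 1)).
  { rewrite HT, (proj2 (Hconj 1 ltac:(lra))).
    unfold skew_tent. destruct (Rle_dec 1 0); [lra | f_equal; ring]. }
  assert (Hseg : forall p, segment T (f T) p <-> exists z, r + 1 <= z <= 1 /\ tent_chart s z = p).
  { intros p. rewrite HfT, HT. apply segment_affine_path. lra. }
  split.
  - intros p Hp. apply Hseg in Hp as [z [Hz <-]]. apply Hseg.
    exists (skew_tent u r z). split; [apply Hconj | symmetry; apply Hconj]; exact Hz.
  - exists (tent_chart s). split; [apply affine_path_continuous |].
    split; [| split; [exact Hseg | exact Hconj]].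
    intros z w _ _. apply affine_path_inj. simpl.
    apply Rgt_not_eq, Rdiv_lt_0_compat; lra.
Qed.
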